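(* Let $\lambda_v\ge0$, $r_v>0$ and $\rho_v=\lambda_v/r_v$ for $v\in V$. There exists a rate allocation scheme $\gamma$ for which the Markov process $N(t)$ is positive recurrent if and only if $\sum_{v'\in\bar{\mathcal A}(v)}\rho_{v'}<1$ for all $v\in V$.
   Context: $G=(V,E)$ is a finite directed rooted tree with vertex set $V=\{1,\dots,|V|\}$ and root $1$, edges oriented from parent to child. For $v\in V$: $\mathcal A(v)$ is the set of strict ancestors of $v$, $\bar{\mathcal A}(v)=\mathcal A(v)\cup\{v\}$. $\mathcal Z=\{z\in\{0,1\}^{V}: z_v z_{v'}=0 \text{ for all } v\in V,\ v'\in\mathcal A(v)\}$ and $\mathrm{conv}(\mathcal Z)$ is its convex hull. A rate allocation scheme is a map $\gamma:\mathbb N^{V}\to\mathrm{conv}(\mathcal Z)$. Given it, $N(t)\in\mathbb N^{V}$ is the continuous-time Markov chain (elastic traffic: flows arrive to beam $v$ as a Poisson process of rate $\lambda_v$, have exponential sizes of mean $1$, and beam $v$ serves at rate $r_v$ when active) with transition rates $n\to n+e^v$ at rate $\lambda_v$ and $n\to n-e^v$ at rate $r_v\gamma_v(n)\mathbf 1\{n_v\ge1\}$, where $e^v$ is the $v$-th canonical basis vector. *)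

From Stdlib Require Import Reals List Arith Bool.
Import ListNotations.
Open Scope R_scope.

(* Vertex set V = {1,...,nV}; root 1; the tree is given by a parent map
   [par] (par v is the parent of v for v in V, v <> 1; par 1 is irrelevant). *)
Definition inV (nV v : nat) : Prop := (1 <= v <= nV)%nat.

Definition is_rooted_tree (nV : nat) (par : nat -> nat) : Prop :=
  (1 <= nV)%nat /\
  (forall v, (2 <= v <= nV)%nat -> (1 <= par v <= nV)%nat) /\
  (forall v, inV nV v -> exists k, Nat.iter k par v = 1%nat).

(* u is a strict ancestor of v: u is reached by walking k >= 1 parent steps
   from v without having passed through the root 1 before.
   (Depth is < nV in a tree on nV vertices, so k ranges over 1..nV.) *)
Definition ancb (nV : nat) (par : nat -> nat) (u v : nat) : bool :=
  existsb (fun k => Nat.eqb (Nat.iter k par v) u &&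
                    forallb (fun j => negb (Nat.eqb (Nat.iter j par v) 1)) (seq 0 k))
          (seq 1 nV).

Definition ancbarb (nV : nat) (par : nat -> nat) (u v : nat) : bool :=
  Nat.eqb u v || ancb nV par u v.

Definition sumV (nV : nat) (f : nat -> R) : R :=
  fold_right (fun v acc => f v + acc) 0 (seq 1 nV).

Definition inZ (nV : nat) (par : nat -> nat) (z : nat -> bool) : Prop :=
  forall v u : nat, inV nV v -> ancb nV par u v = true -> z v = true -> z u = true -> False.

Definition in_convZ (nV : nat) (par : nat -> nat) (g : nat -> R) : Prop :=
  exists l : list (R * (nat -> bool)),
    (forall p, In p l -> 0 <= fst p /\ inZ nV par (snd p)) /\
    fold_right (fun (p : R * (nat -> bool)) (acc : R) => fst p + acc) 0 l = 1 /\
    (forall v, inV nV v ->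
       g v = fold_right (fun (p : R * (nat -> bool)) (acc : R) => (if snd p v then fst p else 0) + acc) 0 l).

(* states n in N^V are functions nat -> nat (only coordinates in V matter) *)
Definition state := nat -> nat.

Definition is_scheme (nV : nat) (par : nat -> nat) (gam : state -> nat -> R) : Prop :=
  forall n : state, in_convZ nV par (gam n).

Definition incr (x : state) (v : nat) : state :=
  fun u => if Nat.eqb u v then S (x u) else x u.
Definition decr (x : state) (v : nat) : state :=
  fun u => if Nat.eqb u v then Nat.pred (x u) else x u.
Definition zero_state : state := fun _ => 0%nat.
Definition is_zero (nV : nat) (x : state) : bool :=
  forallb (fun v => Nat.eqb (x v) 0) (seq 1 nV).

Definition drate (r : nat -> R) (gam : state -> nat -> R) (x : state) (v : nat) : R :=
  r v * gam x v * (if Nat.leb 1 (x v) then 1 else 0).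

Definition qrate (nV : nat) (lam r : nat -> R) (gam : state -> nat -> R) (x : state) : R :=
  sumV nV (fun v => lam v + drate r gam x v).

(* hit L x : probability that the embedded jump chain started at x hits 0
   for the first time at jump L (x itself counts as hitting at time 0). *)
Fixpoint hit (nV : nat) (lam r : nat -> R) (gam : state -> nat -> R)
         (L : nat) (x : state) : R :=
  match L with
  | O => if is_zero nV x then 1 else 0
  | S L' => if is_zero nV x then 0 else
      sumV nV (fun v =>
        lam v / qrate nV lam r gam x * hit nV lam r gam L' (incr x v) +
        drate r gam x v / qrate nV lam r gam x * hit nV lam r gam L' (decr x v))
  end.

(* tm L x : expected total holding time accumulated before hitting 0,
   restricted to the event of first hitting 0 at jump L. *)
Fixpoint tm (nV : nat) (lam r : nat -> R) (gam : state -> nat -> R)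
         (L : nat) (x : state) : R :=
  match L with
  | O => 0
  | S L' => if is_zero nV x then 0 else
      sumV nV (fun v =>
        lam v / qrate nV lam r gam x *
          (hit nV lam r gam L' (incr x v) / qrate nV lam r gam x
           + tm nV lam r gam L' (incr x v)) +
        drate r gam x v / qrate nV lam r gam x *
          (hit nV lam r gam L' (decr x v) / qrate nV lam r gam x
           + tm nV lam r gam L' (decr x v)))
  end.

(* starting from 0: probability of first return to 0 at jump L+1 *)
Definition ret_prob (nV : nat) (lam r : nat -> R) (gam : state -> nat -> R) (L : nat) : R :=
  let x := zero_state in
  sumV nV (fun v =>
    lam v / qrate nV lam r gam x * hit nV lam r gam L (incr x v) +
    drate r gam x v / qrate nV lam r gam x * hit nV lam r gam L (decr x v)).

(* contribution to E_0[T_0] (T_0 = first return time to 0 after the first jump,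
   including the initial holding time) of paths returning at jump L+1 *)
Definition ret_time (nV : nat) (lam r : nat -> R) (gam : state -> nat -> R) (L : nat) : R :=
  let x := zero_state in
  sumV nV (fun v =>
    lam v / qrate nV lam r gam x *
      (hit nV lam r gam L (incr x v) / qrate nV lam r gam x + tm nV lam r gam L (incr x v)) +
    drate r gam x v / qrate nV lam r gam x *
      (hit nV lam r gam L (decr x v) / qrate nV lam r gam x + tm nV lam r gam L (decr x v))).

(* positive recurrence (Norris): the state 0 is absorbing (q(0) = 0), or
   the return to 0 is almost sure and the mean return time E_0[T_0] is finite. *)
Definition positive_recurrent (nV : nat) (lam r : nat -> R) (gam : state -> nat -> R) : Prop :=
  qrate nV lam r gam zero_state = 0 \/
  (infinite_sum (ret_prob nV lam r gam) 1 /\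
   exists m, infinite_sum (ret_time nV lam r gam) m).

(* For a beam w let W(x) = sum_{u in A(w) U {w}} x_u / r_u be the workload of the path
   from the root to w.  Arrivals raise W at rate sum_{u in A(w) U {w}} rho_u, while a point of Z
   serves at most one beam of this chain, so services lower W at rate at most 1.  If the path load
   is >= 1, W is a submartingale with bounded jumps until the chain empties; then the probability
   of not having returned to 0 after N jumps is at least of order 1/N, so the expected number of
   jumps before returning, and with it the mean return time, is infinite.

   Serve every nonempty beam whose strict ancestors are all empty.  A positive path
   workload then decreases at rate at least 1 - rho(w) >= eps, so sum_w W_w^2 has drift at most
   -2 eps nu |x| + B, and adding M (1 - th^|x|) takes care of the states with few flows.  The
   resulting U satisfies P U <= U - 1 off 0 for the jump chain, which bounds the probability of
   not having returned after N jumps by U/N and the mean return time by U / sum_v lambda_v. *)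

From Stdlib Require Import Reals List Arith Bool Lia Lra Classical.
Import ListNotations.
Open Scope R_scope.

Lemma inV_seq nV v : inV nV v <-> In v (seq 1 nV).
Proof. unfold inV. rewrite in_seq. lia. Qed.

Section SumV.
Variable nV : nat.
Implicit Types f g : nat -> R.

Lemma sumV_ext f g : (forall v, inV nV v -> f v = g v) -> sumV nV f = sumV nV g.
Proof.
  unfold sumV; setoid_rewrite inV_seq.
  induction (seq 1 nV) as [|a l IH]; intros H; simpl; [|rewrite H, IH]; auto with datatypes.
Qed.

Lemma sumV_le f g : (forall v, inV nV v -> f v <= g v) -> sumV nV f <= sumV nV g.
Proof.
  unfold sumV; setoid_rewrite inV_seq.
  induction (seq 1 nV) as [|a l IH]; intros H; simpl; [lra|].
  apply Rplus_le_compat; auto with datatypes.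
Qed.

Lemma sumV_plus f g : sumV nV (fun v => f v + g v) = sumV nV f + sumV nV g.
Proof. unfold sumV; induction (seq 1 nV); simpl; lra. Qed.

Lemma sumV_scal c f : sumV nV (fun v => c * f v) = c * sumV nV f.
Proof. unfold sumV; induction (seq 1 nV); simpl; lra. Qed.

Lemma sumV_minus f g : sumV nV (fun v => f v - g v) = sumV nV f - sumV nV g.
Proof. unfold sumV; induction (seq 1 nV); simpl; lra. Qed.

Lemma sumV_zero : sumV nV (fun _ => 0) = 0.
Proof. unfold sumV; induction (seq 1 nV); simpl; lra. Qed.

Lemma sumV_nonneg f : (forall v, inV nV v -> 0 <= f v) -> 0 <= sumV nV f.
Proof. intros H. rewrite <- sumV_zero. now apply sumV_le. Qed.

Lemma sumV_indicator a c : inV nV a -> sumV nV (fun v => if Nat.eqb v a then c else 0) = c.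
Proof.
  intros Ha. apply inV_seq in Ha.
  assert (Hcount : forall l, fold_right (fun v acc => (if Nat.eqb v a then c else 0) + acc) 0 l
                             = INR (count_occ Nat.eq_dec l a) * c).
  { induction l as [|b l IH]; simpl; [lra|].
    destruct (Nat.eqb_spec b a), (Nat.eq_dec b a); try contradiction; rewrite IH, ?S_INR; lra. }
  unfold sumV. rewrite Hcount, (proj1 (NoDup_count_occ' Nat.eq_dec _) (seq_NoDup nV 1) a Ha).
  simpl; lra.
Qed.

Lemma sumV_ge_term f a : (forall v, inV nV v -> 0 <= f v) -> inV nV a -> f a <= sumV nV f.
Proof.
  intros H Ha. rewrite <- (sumV_indicator a (f a) Ha). apply sumV_le.
  intros v Hv. destruct (Nat.eqb_spec v a) as [->|_]; [lra|auto].
Qed.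

Lemma sumV_pos_exists f : 0 < sumV nV f -> exists v, inV nV v /\ f v <> 0.
Proof.
  intros Hpos. apply NNPP. intros Hnone.
  rewrite (sumV_ext f (fun _ => 0)), sumV_zero in Hpos; [lra|].
  intros v Hv. apply NNPP. eauto.
Qed.

Lemma fold_sumV_comm (A : Type) (l : list A) (F : A -> nat -> R) :
  fold_right (fun p acc => sumV nV (F p) + acc) 0 l =
  sumV nV (fun v => fold_right (fun p acc => F p v + acc) 0 l).
Proof.
  induction l as [|p l IH]; simpl; [now rewrite sumV_zero|].
  now rewrite IH, sumV_plus.
Qed.

Lemma sumV_swap (F : nat -> nat -> R) :
  sumV nV (fun v => sumV nV (F v)) = sumV nV (fun w => sumV nV (fun v => F v w)).
Proof. exact (fold_sumV_comm _ (seq 1 nV) F). Qed.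

Lemma inV_pos_lower_bound g :
  (forall v, inV nV v -> 0 < g v) -> exists m, 0 < m /\ forall v, inV nV v -> m <= g v.
Proof.
  setoid_rewrite inV_seq. induction (seq 1 nV) as [|a l IH]; simpl; intros H.
  - exists 1. split; [lra|tauto].
  - destruct IH as [m [Hm Hle]]; [auto|].
    exists (Rmin m (g a)). split; [apply Rmin_glb_lt; auto|].
    intros v [<-|Hv]; [apply Rmin_r|]. eapply Rle_trans; [apply Rmin_l|auto].
Qed.

End SumV.

Definition walk_avoids_root (par : nat -> nat) (v k : nat) : Prop :=
  forall j, (j < k)%nat -> Nat.iter j par v <> 1%nat.

Lemma walk_avoids_root_add par v k m :
  walk_avoids_root par v (m + k) <->
  walk_avoids_root par v k /\ walk_avoids_root par (Nat.iter k par v) m.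
Proof.
  unfold walk_avoids_root. split.
  - intros H. split; intros j Hj; [apply H; lia|].
    rewrite <- Nat.iter_add. apply H. lia.
  - intros [Hk Hm] j Hj. destruct (Nat.lt_ge_cases j k); [auto|].
    replace j with (j - k + k)%nat by lia. rewrite Nat.iter_add. apply Hm. lia.
Qed.

Lemma forallb_walk_avoids_root par v k :
  forallb (fun j => negb (Nat.eqb (Nat.iter j par v) 1)) (seq 0 k) = true <->
  walk_avoids_root par v k.
Proof.
  unfold walk_avoids_root. rewrite forallb_forall.
  setoid_rewrite in_seq. setoid_rewrite negb_true_iff. setoid_rewrite Nat.eqb_neq.
  split; intros H j Hj; apply H; lia.
Qed.

Lemma ancb_spec nV par u v :
  ancb nV par u v = true <->
  exists k, (1 <= k <= nV)%nat /\ Nat.iter k par v = u /\ walk_avoids_root par v k.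
Proof.
  unfold ancb. rewrite existsb_exists. setoid_rewrite in_seq.
  setoid_rewrite andb_true_iff. setoid_rewrite Nat.eqb_eq. setoid_rewrite forallb_walk_avoids_root.
  split; intros [k Hk]; exists k; intuition lia.
Qed.

Lemma ancbarb_spec nV par u v :
  ancbarb nV par u v = true <->
  exists k, (k <= nV)%nat /\ Nat.iter k par v = u /\ walk_avoids_root par v k.
Proof.
  unfold ancbarb. rewrite orb_true_iff, Nat.eqb_eq, ancb_spec. split.
  - intros [<-|[k Hk]].
    + exists 0%nat. repeat split; [lia|]. intros j Hj. lia.
    + exists k. intuition lia.
  - intros [[|k] [Hk [Hu Hw]]]; [now left|].
    right. exists (S k). intuition lia.
Qed.

Lemma ancbarb_refl nV par w : ancbarb nV par w w = true.
Proof. unfold ancbarb. now rewrite Nat.eqb_refl. Qed.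

Lemma ancbarb_comparable nV par u v w :
  ancbarb nV par u w = true -> ancbarb nV par v w = true -> u <> v ->
  ancb nV par u v = true \/ ancb nV par v u = true.
Proof.
  rewrite !ancbarb_spec, !ancb_spec. intros [k [Hk [<- Hkw]]] [m [Hm [<- Hmw]]] Hne.
  destruct (lt_eq_lt_dec k m) as [[Hlt|<-]|Hlt]; [right| contradiction |left].
  - exists (m - k)%nat. rewrite <- Nat.iter_add. replace (m - k + k)%nat with m by lia.
    split; [lia|]. split; [reflexivity|].
    apply walk_avoids_root_add. now replace (m - k + k)%nat with m by lia.
  - exists (k - m)%nat. rewrite <- Nat.iter_add. replace (k - m + m)%nat with k by lia.
    split; [lia|]. split; [reflexivity|].
    apply walk_avoids_root_add. now replace (k - m + m)%nat with k by lia.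
Qed.

Lemma ex_max_nat (P : nat -> Prop) n :
  (exists k, P k) -> (forall k, P k -> (k <= n)%nat) ->
  exists k, P k /\ forall k', P k' -> (k' <= k)%nat.
Proof.
  revert P. induction n as [|n IH]; intros P [k Hk] Hb.
  - exists k. split; [auto|]. intros k' Hk'. specialize (Hb k' Hk'). lia.
  - destruct (classic (P (S n))) as [HS|HS]; [exists (S n); auto|].
    apply IH; [eauto|]. intros k' Hk'. specialize (Hb k' Hk').
    destruct (Nat.eq_dec k' (S n)) as [->|]; [contradiction|lia].
Qed.

Section RootedTree.
Variables (nV : nat) (par : nat -> nat).
Hypothesis HT : is_rooted_tree nV par.

Lemma iter_par_inV v k :
  inV nV v -> walk_avoids_root par v k -> inV nV (Nat.iter k par v).
Proof.
  destruct HT as [_ [Hpar _]]. intros Hv. induction k as [|k IH]; intros Hk; [exact Hv|].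
  assert (inV nV (Nat.iter k par v)) by (apply IH; intros j Hj; apply Hk; lia).
  assert (Nat.iter k par v <> 1%nat) by (apply Hk; lia).
  unfold inV in *. simpl. apply Hpar. lia.
Qed.

Lemma ancb_inV u v : inV nV v -> ancb nV par u v = true -> inV nV u.
Proof. intros Hv. rewrite ancb_spec. intros [k [_ [<- Hk]]]. now apply iter_par_inV. Qed.

(* Pigeonhole: before reaching the root, the walk v, par v, ... visits distinct vertices
   of V \ {1}. *)
Lemma walk_avoids_root_lt v k : inV nV v -> walk_avoids_root par v k -> (k < nV)%nat.
Proof.
  intros Hv Hk. destruct HT as [_ [_ Hroot]].
  destruct (dec_inh_nat_subset_has_unique_least_element (fun d => Nat.iter d par v = 1%nat))
    as [d [[Hd Hmin] _]]; [intros; apply classic | now apply Hroot|].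
  assert (Hwalk : walk_avoids_root par v d) by (intros j Hj E; specialize (Hmin j E); lia).
  assert (k <= d)%nat by (destruct (Nat.le_gt_cases k d); [auto|now destruct (Hk d)]).
  set (L := map (fun j => Nat.iter j par v) (seq 0 d)).
  assert (HND : NoDup L).
  { apply NoDup_map_NoDup_ForallPairs; [|apply seq_NoDup].
    assert (Hinj : forall i j, (i < j < d)%nat -> Nat.iter i par v <> Nat.iter j par v).
    { intros i j Hij E. apply (Hwalk (d - j + i)%nat); [lia|].
      rewrite Nat.iter_add, E, <- Nat.iter_add. now replace (d - j + j)%nat with d by lia. }
    intros i j Hi Hj E. rewrite in_seq in Hi, Hj.
    destruct (lt_eq_lt_dec i j) as [[c|c]|c]; auto;
      exfalso; [apply (Hinj i j)|apply (Hinj j i)]; auto; lia. }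
  assert (Hincl : incl L (seq 2 (nV - 1))).
  { intros u Hu. apply in_map_iff in Hu as [j [<- Hj]]. rewrite in_seq in Hj |- *.
    assert (inV nV (Nat.iter j par v))
      by (apply iter_par_inV; [auto|intros i Hi; apply Hwalk; lia]).
    assert (Nat.iter j par v <> 1%nat) by (apply Hwalk; lia).
    unfold inV in *. lia. }
  pose proof (NoDup_incl_length HND Hincl) as Hlen.
  unfold L in Hlen. rewrite length_map, !length_seq in Hlen. unfold inV in Hv. lia.
Qed.

Definition top_busy (x : state) (a : nat) : bool :=
  Nat.leb 1 (x a) && forallb (fun u => negb (ancb nV par u a) || Nat.eqb (x u) 0) (seq 1 nV).

Lemma top_busy_spec x a :
  top_busy x a = true <->
  (1 <= x a)%nat /\ forall u, inV nV u -> ancb nV par u a = true -> x u = 0%nat.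
Proof.
  unfold top_busy. rewrite andb_true_iff, Nat.leb_le, forallb_forall.
  setoid_rewrite <- inV_seq. setoid_rewrite orb_true_iff.
  setoid_rewrite negb_true_iff. setoid_rewrite Nat.eqb_eq.
  split; intros [Hbusy Hidle]; split; auto; intros u Hu.
  - intros Hanc. destruct (Hidle u Hu) as [E|E]; congruence.
  - destruct (ancb nV par u a) eqn:E; auto.
Qed.

Lemma top_busy_inZ x : inZ nV par (top_busy x).
Proof.
  intros v u Hv Hanc Hv_top Hu_top.
  apply top_busy_spec in Hv_top as [_ Hidle]. apply top_busy_spec in Hu_top as [Hbusy _].
  rewrite (Hidle u (ancb_inV u v Hv Hanc) Hanc) in Hbusy. lia.
Qed.

Lemma top_busy_exists x w :
  inV nV w -> (exists u, ancbarb nV par u w = true /\ (1 <= x u)%nat) ->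
  exists a, inV nV a /\ ancbarb nV par a w = true /\ top_busy x a = true.
Proof.
  intros Hw [u [Hu Hxu]].
  set (Q := fun k => walk_avoids_root par w k /\ (1 <= x (Nat.iter k par w))%nat).
  destruct (ex_max_nat Q nV) as [k [[Hk Hxk] Hmax]].
  - apply ancbarb_spec in Hu as [k [_ [<- Hk]]]. now exists k.
  - intros k [Hk _]. pose proof (walk_avoids_root_lt w k Hw Hk). lia.
  - pose proof (walk_avoids_root_lt w k Hw Hk).
    exists (Nat.iter k par w). split; [now apply iter_par_inV|]. split.
    + apply ancbarb_spec. exists k. repeat split; auto; lia.
    + apply top_busy_spec. split; [auto|]. intros u' _ Hanc.
      apply ancb_spec in Hanc as [m [Hm [<- Hwalk]]].
      destruct (Nat.eq_dec (x (Nat.iter m par (Nat.iter k par w))) 0) as [E|E]; [exact E|].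
      assert (HQ : Q (m + k)%nat)
        by (split; [now apply walk_avoids_root_add | rewrite Nat.iter_add; lia]).
      specialize (Hmax _ HQ). lia.
Qed.

Lemma convZ_bounds g v : in_convZ nV par g -> inV nV v -> 0 <= g v <= 1.
Proof.
  intros [l [Hl [Hsum Hg]]] Hv. rewrite (Hg v Hv), <- Hsum. clear Hsum Hg.
  induction l as [|p l IH]; simpl; [lra|].
  destruct (Hl p (or_introl eq_refl)) as [Hp _].
  specialize (IH (fun p' Hp' => Hl p' (or_intror Hp'))). destruct (snd p v); lra.
Qed.

Lemma inZ_path_count_le1 z w :
  inZ nV par z -> sumV nV (fun u => if ancbarb nV par u w && z u then 1 else 0) <= 1.
Proof.
  intros Hz.
  destruct (classic (exists a, inV nV a /\ ancbarb nV par a w && z a = true))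
    as [[a [Ha Haw]]|Hnone].
  - rewrite (sumV_ext _ _ (fun u => if Nat.eqb u a then 1 else 0)), sumV_indicator; auto; [lra|].
    intros u Hu. destruct (Nat.eqb_spec u a) as [->|Hne]; [now rewrite Haw|].
    destruct (ancbarb nV par u w && z u) eqn:Huw; [exfalso|reflexivity].
    apply andb_true_iff in Haw as [Haw Hza]. apply andb_true_iff in Huw as [Huw Hzu].
    destruct (ancbarb_comparable nV par u a w Huw Haw Hne) as [Hanc|Hanc];
      [exact (Hz a u Ha Hanc Hza Hzu) | exact (Hz u a Hu Hanc Hzu Hza)].
  - rewrite (sumV_ext _ _ (fun _ => 0)), sumV_zero; [lra|].
    intros u Hu. destruct (ancbarb nV par u w && z u) eqn:E; [exfalso; eauto|reflexivity].
Qed.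

Lemma convZ_path_sum_le1 g w :
  in_convZ nV par g -> sumV nV (fun u => if ancbarb nV par u w then g u else 0) <= 1.
Proof.
  intros [l [Hl [Hsum Hg]]].
  set (F := fun (p : R * (nat -> bool)) u =>
              fst p * (if ancbarb nV par u w && snd p u then 1 else 0)).
  rewrite (sumV_ext _ _ (fun u => fold_right (fun p acc => F p u + acc) 0 l)).
  2: { intros u Hu. rewrite (Hg u Hu). unfold F. clear.
       destruct (ancbarb nV par u w); simpl; induction l as [|p l IH]; simpl; auto.
       - rewrite IH. destruct (snd p u); ring.
       - rewrite <- IH. ring. }
  rewrite <- fold_sumV_comm, <- Hsum. clear Hsum Hg.
  induction l as [|p l IH]; simpl; [lra|]. apply Rplus_le_compat.
  - destruct (Hl p (or_introl eq_refl)) as [Hp Hz]. unfold F. rewrite sumV_scal.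
    pose proof (inZ_path_count_le1 (snd p) w Hz). nra.
  - apply IH. intros p' Hp'. apply Hl. now right.
Qed.

End RootedTree.

Lemma Un_cv_0_of_mul_bound (a : nat -> R) C :
  (forall n, 0 <= a n) -> (forall n, INR n * a n <= C) -> Un_cv a 0.
Proof.
  intros Ha Hb eps Heps. destruct (INR_archimed eps C Heps) as [N HN].
  exists N. intros n Hn. unfold R_dist. rewrite Rminus_0_r, Rabs_right by (apply Rle_ge; auto).
  assert (INR N <= INR n) by (apply le_INR; lia).
  pose proof (Hb n). pose proof (Ha n). pose proof (pos_INR n). nra.
Qed.

Fixpoint harmonic (n : nat) : R :=
  match n with
  | O => 0
  | S n' => harmonic n' + / (INR n' + 1)
  end.

Lemma ln_le_harmonic n : ln (INR n + 1) <= harmonic n.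
Proof.
  induction n as [|n IH]; [simpl; rewrite Rplus_0_l, ln_1; lra|].
  simpl harmonic. rewrite S_INR.
  assert (Hn : 0 < INR n + 1) by (pose proof (pos_INR n); lra).
  pose proof (Rinv_0_lt_compat _ Hn).
  replace (INR n + 1 + 1) with ((INR n + 1) * (1 + / (INR n + 1))) by (field; lra).
  rewrite ln_mult by lra.
  enough (ln (1 + / (INR n + 1)) <= / (INR n + 1)) by lra.
  rewrite <- (ln_exp (/ (INR n + 1))) at 2. left. apply ln_increasing; [lra|].
  apply exp_ineq1. lra.
Qed.

Lemma harmonic_unbounded B : exists n, B < harmonic n.
Proof.
  destruct (INR_archimed 1 (exp B)) as [n Hn]; [lra|].
  exists n. eapply Rlt_le_trans; [|apply ln_le_harmonic].
  rewrite <- (ln_exp B) at 1. apply ln_increasing; [apply exp_pos|lra].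
Qed.

Lemma geometric_compensation a K th p :
  0 < a -> 0 < th <= 1 -> 0 < p ->
  exists M, 0 <= M /\ forall D : nat, K <= a * INR (S D) + M * (th ^ D * p).
Proof.
  intros Ha Hth Hp. destruct (INR_archimed a K Ha) as [D0 HD0].
  assert (Hpow : 0 < th ^ D0 * p) by (apply Rmult_lt_0_compat; [apply pow_lt|]; lra).
  set (M := Rabs K / (th ^ D0 * p)).
  assert (HM : 0 <= M) by (apply Rle_mult_inv_pos; [apply Rabs_pos|auto]).
  exists M. split; [exact HM|]. intros D.
  pose proof (Rle_abs K). pose proof (pos_INR (S D)).
  assert (0 <= M * (th ^ D * p))
    by (apply Rmult_le_pos; [|apply Rmult_le_pos; [apply pow_le|]]; lra).
  destruct (Nat.le_gt_cases D0 (S D)) as [Hle|Hlt]; [apply le_INR in Hle; nra|].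
  assert (Hdecr : th ^ D0 <= th ^ D).
  { replace D0 with (D0 - D + D)%nat by lia. rewrite pow_add.
    rewrite <- (Rmult_1_l (th ^ D)) at 2. apply Rmult_le_compat_r; [apply pow_le; lra|].
    rewrite <- (pow1 (D0 - D)). apply pow_incr. lra. }
  assert (M * (th ^ D0 * p) = Rabs K) by (unfold M, Rdiv; rewrite Rmult_assoc, Rinv_l; lra).
  assert (M * (th ^ D0 * p) <= M * (th ^ D * p))
    by (apply Rmult_le_compat_l; [|apply Rmult_le_compat_r]; lra).
  nra.
Qed.

Section Network.
Variables (nV : nat) (lam r : nat -> R).
Hypothesis Hlam : forall v, inV nV v -> 0 <= lam v.
Hypothesis Hr : forall v, inV nV v -> 0 < r v.

Definition qmax : R := sumV nV (fun v => lam v + r v).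

Lemma is_zero_spec x : is_zero nV x = true <-> forall u, inV nV u -> x u = 0%nat.
Proof.
  unfold is_zero. rewrite forallb_forall. setoid_rewrite <- inV_seq.
  now setoid_rewrite Nat.eqb_eq.
Qed.

Lemma is_zero_false x : is_zero nV x = false -> exists u, inV nV u /\ (1 <= x u)%nat.
Proof.
  intros Hz. apply NNPP. intros Hnone.
  assert (is_zero nV x = true) by (apply is_zero_spec; intros u Hu;
    destruct (x u) eqn:E; [reflexivity|exfalso; apply Hnone; exists u; split; [auto|lia]]).
  congruence.
Qed.

Definition wsum (h : nat -> R) (x : state) : R := sumV nV (fun u => h u * INR (x u)).

Definition num_flows (x : state) : nat :=
  fold_right (fun u acc => (x u + acc)%nat) 0%nat (seq 1 nV).

Lemma wsum_nonneg h x : (forall u, inV nV u -> 0 <= h u) -> 0 <= wsum h x.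
Proof.
  intros Hh. apply sumV_nonneg. intros u Hu. apply Rmult_le_pos; [auto|apply pos_INR].
Qed.

Lemma wsum_zero h x : is_zero nV x = true -> wsum h x = 0.
Proof.
  rewrite is_zero_spec. intros Hz. rewrite <- (sumV_zero nV). apply sumV_ext.
  intros u Hu. rewrite (Hz u Hu). simpl. ring.
Qed.

Lemma wsum_incr h x v : inV nV v -> wsum h (incr x v) = wsum h x + h v.
Proof.
  intros Hv. unfold wsum.
  rewrite (sumV_ext _ _ (fun u => h u * INR (x u) + (if Nat.eqb u v then h v else 0))).
  - now rewrite sumV_plus, sumV_indicator.
  - intros u _. unfold incr. destruct (Nat.eqb_spec u v) as [->|]; [rewrite S_INR|]; ring.
Qed.

Lemma wsum_decr h x v : inV nV v -> (1 <= x v)%nat -> wsum h (decr x v) = wsum h x - h v.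
Proof.
  intros Hv Hx. unfold wsum.
  rewrite (sumV_ext _ _ (fun u => h u * INR (x u) + (if Nat.eqb u v then - h v else 0))).
  - rewrite sumV_plus, sumV_indicator by auto. ring.
  - intros u _. unfold decr. destruct (Nat.eqb_spec u v) as [->|]; [|ring].
    destruct (x v) as [|k]; [lia|]. simpl Nat.pred. rewrite S_INR. ring.
Qed.

Lemma wsum_decr_idle h x v : x v = 0%nat -> wsum h (decr x v) = wsum h x.
Proof.
  intros Hx. apply sumV_ext. intros u _. unfold decr.
  destruct (Nat.eqb_spec u v) as [->|]; now rewrite ?Hx.
Qed.

Lemma num_flows_INR x : INR (num_flows x) = wsum (fun _ => 1) x.
Proof.
  unfold num_flows, wsum, sumV. induction (seq 1 nV) as [|a l IH]; simpl; [reflexivity|].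
  rewrite plus_INR, IH. ring.
Qed.

Lemma num_flows_incr x v : inV nV v -> num_flows (incr x v) = S (num_flows x).
Proof. intros Hv. apply INR_eq. now rewrite S_INR, !num_flows_INR, wsum_incr. Qed.

Lemma num_flows_decr x v : inV nV v -> (1 <= x v)%nat -> S (num_flows (decr x v)) = num_flows x.
Proof.
  intros Hv Hx. apply INR_eq. rewrite S_INR, !num_flows_INR, wsum_decr by auto. ring.
Qed.

Lemma num_flows_pos x : is_zero nV x = false -> (1 <= num_flows x)%nat.
Proof.
  intros Hz. destruct (is_zero_false x Hz) as [u [Hu Hxu]].
  apply INR_le. rewrite num_flows_INR.
  apply Rle_trans with (INR (x u)); [apply (le_INR 1), Hxu|].
  rewrite <- Rmult_1_l at 1.
  apply (sumV_ge_term nV (fun u => 1 * INR (x u))); [|exact Hu].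
  intros w _. rewrite Rmult_1_l. apply pos_INR.
Qed.

Section JumpChain.
Variable gam : state -> nat -> R.
Hypothesis Hgam : forall x v, inV nV v -> 0 <= gam x v <= 1.
Hypothesis HLam : 0 < sumV nV lam.

Local Notation q := (qrate nV lam r gam).
Local Notation dr := (drate r gam).
Local Notation hitL := (hit nV lam r gam).
Local Notation tmL := (tm nV lam r gam).

Lemma drate_bounds x v : inV nV v -> 0 <= dr x v <= r v.
Proof.
  intros Hv. unfold drate. specialize (Hr v Hv). specialize (Hgam x v Hv).
  destruct (Nat.leb 1 (x v)); rewrite ?Rmult_1_r, ?Rmult_0_r; nra.
Qed.

Lemma drate_idle x v : x v = 0%nat -> dr x v = 0.
Proof. intros E. unfold drate. rewrite E. simpl. ring. Qed.

Lemma qrate_bounds x : sumV nV lam <= q x <= qmax.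
Proof.
  unfold qrate, qmax. split; apply sumV_le; intros v Hv; pose proof (drate_bounds x v Hv); lra.
Qed.

Lemma qrate_pos x : 0 < q x.
Proof. pose proof (qrate_bounds x). lra. Qed.

(* [step f x] is E_x[f(X_1)] for the embedded jump chain X, [gen] the generator of N(t). *)
Definition step (f : state -> R) (x : state) : R :=
  sumV nV (fun v => lam v / q x * f (incr x v) + dr x v / q x * f (decr x v)).

Definition gen (f : state -> R) (x : state) : R :=
  sumV nV (fun v => lam v * (f (incr x v) - f x) + dr x v * (f (decr x v) - f x)).

Lemma step_weights_nonneg x v : inV nV v -> 0 <= lam v / q x /\ 0 <= dr x v / q x.
Proof.
  intros Hv. pose proof (qrate_pos x). pose proof (drate_bounds x v Hv).
  split; apply Rle_mult_inv_pos; auto; lra.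
Qed.

Lemma step_ext f g x : (forall y, f y = g y) -> step f x = step g x.
Proof. intros H. apply sumV_ext. intros v _. now rewrite !H. Qed.

Lemma step_le f g x :
  (forall v, inV nV v -> f (incr x v) <= g (incr x v) /\ f (decr x v) <= g (decr x v)) ->
  step f x <= step g x.
Proof.
  intros H. apply sumV_le. intros v Hv. destruct (H v Hv), (step_weights_nonneg x v Hv).
  apply Rplus_le_compat; now apply Rmult_le_compat_l.
Qed.

Lemma step_mono f g x : (forall y, f y <= g y) -> step f x <= step g x.
Proof. intros H. apply step_le. auto. Qed.

Lemma step_plus f g x : step (fun y => f y + g y) x = step f x + step g x.
Proof. unfold step. rewrite <- sumV_plus. apply sumV_ext. intros; ring. Qed.

Lemma step_scal c f x : step (fun y => c * f y) x = c * step f x.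
Proof. unfold step. rewrite <- sumV_scal. apply sumV_ext. intros; ring. Qed.

Lemma step_const c x : step (fun _ => c) x = c.
Proof.
  unfold step. rewrite (sumV_ext _ _ (fun v => c / q x * (lam v + dr x v)))
    by (intros; unfold Rdiv; ring).
  rewrite sumV_scal. change (sumV nV (fun v => lam v + dr x v)) with (q x).
  field. apply Rgt_not_eq, qrate_pos.
Qed.

Lemma step_gen f x : step f x = f x + gen f x / q x.
Proof.
  rewrite (step_ext f (fun y => f x + (f y - f x))) by (intros; ring).
  rewrite step_plus, step_const. f_equal.
  unfold Rdiv. rewrite Rmult_comm. unfold step, gen. rewrite <- sumV_scal.
  apply sumV_ext. intros; unfold Rdiv; ring.
Qed.

Lemma step_le_of_gen_le f x : gen f x <= - qmax -> step f x <= f x - 1.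
Proof.
  intros Hgen. rewrite step_gen. pose proof (qrate_bounds x). pose proof (qrate_pos x).
  enough (gen f x / q x <= -1) by lra.
  apply Rmult_le_reg_r with (q x); auto. unfold Rdiv. rewrite Rmult_assoc, Rinv_l; lra.
Qed.

Lemma step_ge_arrival f x v :
  inV nV v -> (forall y, 0 <= f y) -> lam v / q x * f (incr x v) <= step f x.
Proof.
  intros Hv Hf.
  set (T := fun u => lam u / q x * f (incr x u) + dr x u / q x * f (decr x u)).
  assert (HT : forall u, inV nV u -> 0 <= T u).
  { intros u Hu. destruct (step_weights_nonneg x u Hu).
    pose proof (Hf (incr x u)). pose proof (Hf (decr x u)). unfold T. nra. }
  apply Rle_trans with (2 := sumV_ge_term nV T v HT Hv).
  destruct (step_weights_nonneg x v Hv). pose proof (Hf (decr x v)). unfold T. nra.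
Qed.

Lemma step_sum (F : nat -> state -> R) N x :
  sum_f_R0 (fun L => step (F L) x) N = step (fun y => sum_f_R0 (fun L => F L y) N) x.
Proof. induction N as [|N IH]; simpl; [reflexivity|]. now rewrite IH, <- step_plus. Qed.

Lemma gen_plus f g x : gen (fun y => f y + g y) x = gen f x + gen g x.
Proof. unfold gen. rewrite <- sumV_plus. apply sumV_ext. intros; ring. Qed.

Lemma gen_scal c f x : gen (fun y => c * f y) x = c * gen f x.
Proof. unfold gen. rewrite <- sumV_scal. apply sumV_ext. intros; ring. Qed.

Lemma gen_sumV (F : nat -> state -> R) x :
  gen (fun y => sumV nV (fun w => F w y)) x = sumV nV (fun w => gen (F w) x).
Proof.
  unfold gen. rewrite <- sumV_swap. apply sumV_ext. intros v _.
  now rewrite <- !sumV_minus, <- !sumV_scal, <- sumV_plus.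
Qed.

Lemma hit_S L x : hitL (S L) x = if is_zero nV x then 0 else step (hitL L) x.
Proof. reflexivity. Qed.

Lemma tm_S L x :
  tmL (S L) x = if is_zero nV x then 0 else step (fun y => hitL L y / q x + tmL L y) x.
Proof. reflexivity. Qed.

Lemma hit_nonneg L x : 0 <= hitL L x.
Proof.
  revert x; induction L as [|L IH]; intros x; [simpl; destruct (is_zero nV x); lra|].
  rewrite hit_S. destruct (is_zero nV x); [lra|].
  rewrite <- (step_const 0 x). now apply step_mono.
Qed.

Lemma tm_nonneg L x : 0 <= tmL L x.
Proof.
  revert x; induction L as [|L IH]; intros x; [simpl; lra|].
  rewrite tm_S. destruct (is_zero nV x); [lra|].
  rewrite <- (step_const 0 x). apply step_mono. intros y.
  pose proof (Rle_mult_inv_pos _ _ (hit_nonneg L y) (qrate_pos x)). pose proof (IH y). lra.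
Qed.

Definition hit_by (N : nat) (x : state) : R := sum_f_R0 (fun L => hitL L x) N.
Definition time_by (N : nat) (x : state) : R := sum_f_R0 (fun L => tmL L x) N.

Lemma hit_by_S N x : hit_by (S N) x = if is_zero nV x then 1 else step (hit_by N) x.
Proof.
  unfold hit_by. rewrite decomp_sum by lia. simpl pred.
  destruct (is_zero nV x) eqn:Hz.
  - rewrite (sum_eq _ (fun _ => 0)) by (intros; now rewrite hit_S, Hz).
    rewrite sum_cte. simpl. rewrite Hz. ring.
  - rewrite (sum_eq _ (fun L => step (hitL L) x)) by (intros; now rewrite hit_S, Hz).
    rewrite step_sum. simpl. now rewrite Hz, Rplus_0_l.
Qed.

Lemma time_by_S N x :
  time_by (S N) x = if is_zero nV x then 0 else step (fun y => hit_by N y / q x + time_by N y) x.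
Proof.
  unfold time_by. rewrite decomp_sum by lia. simpl pred. simpl tm at 1.
  destruct (is_zero nV x) eqn:Hz.
  - rewrite (sum_eq _ (fun _ => 0)) by (intros; now rewrite tm_S, Hz).
    rewrite sum_cte. ring.
  - rewrite (sum_eq _ (fun L => step (fun y => hitL L y / q x + tmL L y) x))
      by (intros; now rewrite tm_S, Hz).
    rewrite step_sum, Rplus_0_l. apply step_ext. intros y.
    unfold hit_by. induction N as [|N IH]; simpl; [reflexivity|]. rewrite IH. unfold Rdiv. ring.
Qed.

Lemma time_by_nonneg N x : 0 <= time_by N x.
Proof.
  unfold time_by. induction N as [|N IH]; cbn [sum_f_R0]; [apply tm_nonneg|].
  pose proof (tm_nonneg (S N) x). lra.
Qed.

(* [stopped f N x] is E_x[f(X_N); X_0, ..., X_N <> 0] for the jump chain X. *)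
Fixpoint stopped (f : state -> R) (N : nat) (x : state) : R :=
  if is_zero nV x then 0 else
  match N with
  | O => f x
  | S N' => step (stopped f N') x
  end.

Definition survival : nat -> state -> R := stopped (fun _ => 1).

Lemma survival_0 x : survival 0 x = if is_zero nV x then 0 else 1.
Proof. reflexivity. Qed.

Lemma survival_S N x : survival (S N) x = if is_zero nV x then 0 else step (survival N) x.
Proof. reflexivity. Qed.

Lemma hit_by_add_survival N x : hit_by N x + survival N x = 1.
Proof.
  revert x; induction N as [|N IH]; intros x.
  - unfold hit_by. simpl. rewrite survival_0. destruct (is_zero nV x); lra.
  - rewrite hit_by_S, survival_S. destruct (is_zero nV x); [lra|].
    rewrite <- step_plus, (step_ext _ (fun _ => 1)) by auto. apply step_const.
Qed.

Lemma survival_bounds N x : 0 <= survival N x <= 1.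
Proof.
  revert x; induction N as [|N IH]; intros x; [rewrite survival_0; destruct (is_zero nV x); lra|].
  rewrite survival_S. destruct (is_zero nV x); [lra|].
  rewrite <- (step_const 0 x), <- (step_const 1 x) at 1.
  split; apply step_mono; intros y; apply IH.
Qed.

Lemma hit_by_bounds N x : 0 <= hit_by N x <= 1.
Proof. pose proof (hit_by_add_survival N x). pose proof (survival_bounds N x). lra. Qed.

Lemma survival_S_le N x : survival (S N) x <= survival N x.
Proof.
  revert x; induction N as [|N IH]; intros x; rewrite survival_S.
  - rewrite survival_0. destruct (is_zero nV x); [lra|].
    rewrite <- (step_const 1 x). apply step_mono. intros y. apply survival_bounds.
  - rewrite survival_S. destruct (is_zero nV x); [lra|]. now apply step_mono.
Qed.

(* [mean_jumps N x] is E_x[min(tau, N)], tau the number of jumps needed to reach 0. *)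
Fixpoint mean_jumps (N : nat) (x : state) : R :=
  match N with
  | O => 0
  | S N' => if is_zero nV x then 0 else 1 + step (mean_jumps N') x
  end.

Lemma mean_jumps_S N x : mean_jumps (S N) x = mean_jumps N x + survival N x.
Proof.
  revert x; induction N as [|N IH]; intros x; simpl mean_jumps.
  - rewrite survival_0. destruct (is_zero nV x); [lra|].
    rewrite step_const. lra.
  - rewrite survival_S. destruct (is_zero nV x); [lra|].
    rewrite (step_ext _ (fun y => mean_jumps N y + survival N y)) by auto.
    rewrite step_plus. lra.
Qed.

Lemma mean_jumps_ge n N x :
  (n <= N)%nat -> mean_jumps n x + INR (N - n) * survival N x <= mean_jumps N x.
Proof.
  induction 1 as [|N HnN IH]; [rewrite Nat.sub_diag; simpl; lra|].
  rewrite mean_jumps_S. replace (S N - n)%nat with (S (N - n)) by lia. rewrite S_INR.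
  pose proof (survival_S_le N x). pose proof (survival_bounds (S N) x).
  pose proof (pos_INR (N - n)).
  nra.
Qed.

(* Each of the first [N] jumps is preceded by a holding time of mean at least [1 / qmax]. *)
Lemma time_by_ge N x : mean_jumps N x - INR N * survival N x <= qmax * time_by N x.
Proof.
  revert x; induction N as [|N IH]; intros x.
  - unfold time_by; simpl. lra.
  - rewrite time_by_S, survival_S. simpl mean_jumps. destruct (is_zero nV x); [lra|].
    rewrite S_INR.
    replace (1 + step (mean_jumps N) x - (INR N + 1) * step (survival N) x)
      with (step (fun y => mean_jumps N y - INR N * survival N y + hit_by N y) x).
    2: { rewrite (step_ext _ (fun y => mean_jumps N y + (- INR N) * survival N y
                                        + (1 + (-1) * survival N y))).
         - rewrite !step_plus, !step_scal, step_const. ring.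
         - intros y. pose proof (hit_by_add_survival N y). lra. }
    rewrite <- step_scal. apply step_mono. intros y.
    pose proof (IH y). pose proof (hit_by_bounds N y). pose proof (qrate_bounds x).
    pose proof (qrate_pos x).
    assert (1 <= qmax / q x).
    { apply Rmult_le_reg_r with (q x); auto. unfold Rdiv. rewrite Rmult_assoc, Rinv_l; lra. }
    assert (hit_by N y <= qmax * (hit_by N y / q x)) by (unfold Rdiv in *; nra).
    lra.
Qed.

Lemma ret_prob_sum N :
  sum_f_R0 (ret_prob nV lam r gam) N = 1 - step (survival N) zero_state.
Proof.
  rewrite (sum_eq _ (fun L => step (hitL L) zero_state)), step_sum by reflexivity.
  rewrite <- (step_const 1 zero_state) at 1.
  rewrite (step_ext (fun _ => 1) (fun y => sum_f_R0 (fun L => hitL L y) N + survival N y)),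
    step_plus by (intros y; apply eq_sym, hit_by_add_survival).
  ring.
Qed.

Lemma ret_time_sum N :
  sum_f_R0 (ret_time nV lam r gam) N =
  step (fun y => hit_by N y / q zero_state + time_by N y) zero_state.
Proof.
  rewrite (sum_eq _ (fun L => step (fun y => hitL L y / q zero_state + tmL L y) zero_state))
    by reflexivity.
  rewrite step_sum. apply step_ext. intros y.
  unfold hit_by, time_by. induction N as [|N IH]; simpl; [reflexivity|].
  rewrite IH. unfold Rdiv. ring.
Qed.

Lemma ret_time_nonneg L : 0 <= ret_time nV lam r gam L.
Proof.
  change (ret_time nV lam r gam L)
    with (step (fun y => hitL L y / q zero_state + tmL L y) zero_state).
  rewrite <- (step_const 0 zero_state). apply step_mono. intros y.
  pose proof (Rle_mult_inv_pos _ _ (hit_nonneg L y) (qrate_pos zero_state)).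
  pose proof (tm_nonneg L y). lra.
Qed.

Lemma gen_wsum h x : gen (wsum h) x = sumV nV (fun v => (lam v - dr x v) * h v).
Proof.
  apply sumV_ext. intros v Hv. rewrite wsum_incr by auto.
  destruct (x v) as [|k] eqn:E.
  - rewrite drate_idle by auto. ring.
  - rewrite wsum_decr by (auto; lia). ring.
Qed.

Lemma gen_wsum_sq h x :
  gen (fun y => wsum h y ^ 2) x =
  2 * wsum h x * gen (wsum h) x + sumV nV (fun v => (lam v + dr x v) * h v ^ 2).
Proof.
  rewrite gen_wsum, <- sumV_scal, <- sumV_plus. apply sumV_ext. intros v Hv.
  rewrite wsum_incr by auto. destruct (x v) as [|k] eqn:E.
  - rewrite drate_idle by auto. ring.
  - rewrite wsum_decr by (auto; lia). ring.
Qed.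

Lemma gen_geometric th x D :
  num_flows x = S D ->
  gen (fun y => 1 - th ^ num_flows y) x =
  th ^ D * (1 - th) * (th * sumV nV lam - sumV nV (fun v => dr x v)).
Proof.
  intros HD. rewrite <- sumV_scal, <- sumV_minus, <- sumV_scal.
  apply sumV_ext. intros v Hv. rewrite num_flows_incr, HD by auto.
  destruct (x v) as [|k] eqn:E.
  - rewrite drate_idle by auto. simpl. ring.
  - rewrite <- (num_flows_decr x v) in HD by (auto; lia). injection HD as ->. simpl. ring.
Qed.

Section FosterLyapunov.
Variable U : state -> R.
Hypothesis HU0 : forall x, 0 <= U x.
Hypothesis HUdrift : forall x, is_zero nV x = false -> step U x <= U x - 1.

Lemma mean_jumps_le_lyapunov N x : mean_jumps N x <= U x.
Proof.
  revert x; induction N as [|N IH]; intros x; simpl mean_jumps; [apply HU0|].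
  destruct (is_zero nV x) eqn:Hz; [apply HU0|].
  pose proof (HUdrift x Hz). pose proof (step_mono _ _ x IH). lra.
Qed.

Lemma time_by_le_lyapunov N x : time_by N x <= U x / sumV nV lam.
Proof.
  revert x; induction N as [|N IH]; intros x.
  - unfold time_by; simpl. apply Rle_mult_inv_pos; auto.
  - rewrite time_by_S. destruct (is_zero nV x) eqn:Hz; [apply Rle_mult_inv_pos; auto|].
    apply Rle_trans with (step (fun y => / sumV nV lam * U y + / sumV nV lam) x).
    + apply step_mono. intros y. pose proof (IH y). pose proof (hit_by_bounds N y).
      pose proof (qrate_bounds x).
      assert (hit_by N y / q x <= / sumV nV lam).
      { apply Rle_trans with (/ q x).
        - rewrite <- (Rmult_1_l (/ q x)). apply Rmult_le_compat_r; [|lra].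
          left; apply Rinv_0_lt_compat, qrate_pos.
        - apply Rinv_le_contravar; lra. }
      unfold Rdiv in *. lra.
    + rewrite step_plus, step_scal, step_const. pose proof (HUdrift x Hz).
      pose proof (Rinv_0_lt_compat _ HLam). unfold Rdiv. nra.
Qed.

Lemma return_of_lyapunov :
  infinite_sum (ret_prob nV lam r gam) 1 /\ exists m, infinite_sum (ret_time nV lam r gam) m.
Proof.
  split.
  - assert (Hcv : Un_cv (fun N => step (survival N) zero_state) 0).
    { apply (Un_cv_0_of_mul_bound _ (step U zero_state)).
      - intros N. rewrite <- (step_const 0 zero_state). apply step_mono, survival_bounds.
      - intros N. rewrite <- step_scal. apply step_mono. intros y.
        pose proof (mean_jumps_ge 0 N y (Nat.le_0_l N)). pose proof (mean_jumps_le_lyapunov N y).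
        rewrite Nat.sub_0_r in *. simpl in *. lra. }
    intros eps Heps. destruct (Hcv eps Heps) as [N0 HN0]. exists N0. intros N HN.
    rewrite ret_prob_sum. unfold R_dist in *.
    replace (1 - step (survival N) zero_state - 1)
      with (- (step (survival N) zero_state - 0)) by ring.
    rewrite Rabs_Ropp. auto.
  - set (B := step (fun y => / q zero_state + U y / sumV nV lam) zero_state).
    destruct (growing_cv (sum_f_R0 (ret_time nV lam r gam))) as [m Hm].
    + intros N. simpl. pose proof (ret_time_nonneg (S N)). lra.
    + exists B. intros z [N ->]. rewrite ret_time_sum. apply step_mono. intros y.
      pose proof (time_by_le_lyapunov N y). pose proof (hit_by_bounds N y).
      pose proof (Rinv_0_lt_compat _ (qrate_pos zero_state)). unfold Rdiv. nra.
    + now exists m.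
Qed.

End FosterLyapunov.

Lemma survival_vanishes v :
  infinite_sum (ret_prob nV lam r gam) 1 -> inV nV v -> 0 < lam v ->
  Un_cv (fun N => survival N (incr zero_state v)) 0.
Proof.
  intros Hp Hv Hlv eps Heps.
  set (w := lam v / q zero_state).
  assert (Hw : 0 < w) by (apply Rdiv_lt_0_compat; auto using qrate_pos).
  destruct (Hp (w * eps)) as [N0 HN0]; [nra|]. exists N0. intros N HN.
  specialize (HN0 N HN). rewrite ret_prob_sum in HN0. unfold R_dist in *.
  pose proof (step_ge_arrival (survival N) zero_state v Hv (fun y => proj1 (survival_bounds N y))).
  pose proof (survival_bounds N (incr zero_state v)). fold w in H.
  replace (1 - step (survival N) zero_state - 1) with (- step (survival N) zero_state) in HN0
    by ring.
  rewrite Rabs_Ropp, Rabs_right in HN0 by nra.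
  rewrite Rminus_0_r, Rabs_right by lra. nra.
Qed.

Lemma time_by_bounded v m :
  infinite_sum (ret_time nV lam r gam) m -> inV nV v -> 0 < lam v ->
  forall N, time_by N (incr zero_state v) <= m * q zero_state / lam v.
Proof.
  intros Hm Hv Hlv N.
  assert (Hsum : sum_f_R0 (ret_time nV lam r gam) N <= m).
  { apply growing_ineq; [|exact Hm]. intros n. simpl. pose proof (ret_time_nonneg (S n)). lra. }
  rewrite ret_time_sum in Hsum.
  set (f := fun y => hit_by N y / q zero_state + time_by N y) in Hsum.
  assert (Hf : forall y, 0 <= f y).
  { intros y. pose proof (Rle_mult_inv_pos _ _ (proj1 (hit_by_bounds N y)) (qrate_pos zero_state)).
    pose proof (time_by_nonneg N y). unfold f. lra. }
  pose proof (step_ge_arrival f zero_state v Hv Hf) as Harr.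
  pose proof (qrate_pos zero_state) as Hq0.
  assert (Hw : 0 < lam v / q zero_state) by now apply Rdiv_lt_0_compat.
  assert (0 <= lam v / q zero_state * (hit_by N (incr zero_state v) / q zero_state))
    by (apply Rmult_le_pos; [lra|apply Rle_mult_inv_pos, Hq0; apply hit_by_bounds]).
  apply Rmult_le_reg_l with (lam v / q zero_state); [exact Hw|].
  replace (lam v / q zero_state * (m * q zero_state / lam v)) with m by (field; lra).
  pose proof (Rle_trans _ _ _ Harr Hsum) as Hy. unfold f in Hy. lra.
Qed.

Lemma mean_jumps_bounded_of_return v :
  infinite_sum (ret_prob nV lam r gam) 1 -> (exists m, infinite_sum (ret_time nV lam r gam) m) ->
  inV nV v -> 0 < lam v -> exists B, forall n, mean_jumps n (incr zero_state v) <= B.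
Proof.
  intros Hp [m Hm] Hv Hlv.
  exists (qmax * (m * q zero_state / lam v) + 1). intros n.
  assert (Hn : 0 < INR n + 1) by (pose proof (pos_INR n); lra).
  destruct (survival_vanishes v Hp Hv Hlv (/ (INR n + 1))) as [N0 HN0];
    [now apply Rinv_0_lt_compat|].
  set (N := (n + N0)%nat). specialize (HN0 N ltac:(unfold N; lia)).
  pose proof (survival_bounds N (incr zero_state v)).
  unfold R_dist in HN0. rewrite Rminus_0_r, Rabs_right in HN0 by lra.
  assert (Hsmall : survival N (incr zero_state v) * (INR n + 1) < / (INR n + 1) * (INR n + 1))
    by (apply Rmult_lt_compat_r; lra).
  rewrite Rinv_l in Hsmall by lra.
  pose proof (mean_jumps_ge n N (incr zero_state v) ltac:(unfold N; lia)) as Hge.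
  rewrite minus_INR in Hge by (unfold N; lia).
  pose proof (time_by_ge N (incr zero_state v)) as Htime.
  pose proof (time_by_bounded v m Hm Hv Hlv N) as Hbound.
  pose proof (qrate_bounds zero_state). pose proof (qrate_pos zero_state).
  apply Rmult_le_compat_l with (r := qmax) in Hbound; [|lra].
  nra.
Qed.

Section Submartingale.
Variables (W : state -> R) (c : R).
Hypothesis HWzero : forall x, is_zero nV x = true -> W x = 0.
Hypothesis HWsub : forall x, is_zero nV x = false -> W x <= step W x.
Hypothesis HWinc : forall x v, inV nV v -> W (incr x v) <= W x + c /\ W (decr x v) <= W x + c.
Hypothesis Hc : 0 <= c.

Lemma stopped_ge N x : W x <= stopped W N x.
Proof.
  revert x; induction N as [|N IH]; intros x; simpl;
    destruct (is_zero nV x) eqn:Hz; try (rewrite HWzero by auto); try lra.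
  eapply Rle_trans; [now apply HWsub|]. now apply step_mono.
Qed.

Lemma stopped_le N x : stopped W N x <= (W x + INR N * c) * survival N x.
Proof.
  revert x; induction N as [|N IH]; intros x.
  - rewrite survival_0. simpl. destruct (is_zero nV x); lra.
  - rewrite survival_S. simpl stopped. destruct (is_zero nV x); [lra|].
    rewrite <- step_scal. apply step_le. intros v Hv. destruct (HWinc x v Hv).
    rewrite S_INR. split; (eapply Rle_trans; [apply IH|]);
      apply Rmult_le_compat_r; try apply survival_bounds; lra.
Qed.

Lemma survival_ge N x : 0 < W x -> W x / (W x + INR N * c) <= survival N x.
Proof.
  intros Hpos. pose proof (stopped_ge N x). pose proof (stopped_le N x).
  assert (0 <= INR N * c) by (apply Rmult_le_pos; [apply pos_INR|auto]).
  apply Rmult_le_reg_l with (W x + INR N * c); [lra|]. field_simplify; lra.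
Qed.

Lemma mean_jumps_ge_harmonic n x : 0 < W x -> W x / (W x + c) * harmonic n <= mean_jumps n x.
Proof.
  intros Hpos. induction n as [|n IH]; [simpl; lra|].
  rewrite mean_jumps_S. simpl harmonic. pose proof (survival_ge n x Hpos). pose proof (pos_INR n).
  enough (W x / (W x + c) * / (INR n + 1) <= W x / (W x + INR n * c)) by lra.
  unfold Rdiv. rewrite Rmult_assoc. apply Rmult_le_compat_l; [lra|].
  rewrite <- Rinv_mult. apply Rinv_le_contravar; [|nra].
  assert (0 <= INR n * c) by (apply Rmult_le_pos; lra). lra.
Qed.

Lemma not_return_of_submartingale v :
  inV nV v -> 0 < lam v -> 0 < W (incr zero_state v) ->
  ~ (infinite_sum (ret_prob nV lam r gam) 1 /\ exists m, infinite_sum (ret_time nV lam r gam) m).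
Proof.
  intros Hv Hlv HWv [Hp Hm].
  destruct (mean_jumps_bounded_of_return v Hp Hm Hv Hlv) as [B HB].
  set (alpha := W (incr zero_state v) / (W (incr zero_state v) + c)).
  assert (Halpha : 0 < alpha) by (apply Rdiv_lt_0_compat; lra).
  destruct (harmonic_unbounded (B / alpha)) as [n Hn].
  pose proof (mean_jumps_ge_harmonic n _ HWv) as Hharm. fold alpha in Hharm.
  pose proof (HB n).
  apply (Rmult_lt_compat_l alpha) in Hn; auto.
  replace (alpha * (B / alpha)) with B in Hn by (field; lra). lra.
Qed.

End Submartingale.

End JumpChain.

Section PathLoads.
Variable par : nat -> nat.

Definition path_weight (w u : nat) : R := if ancbarb nV par u w then / r u else 0.

Definition path_load (w : nat) : R :=
  sumV nV (fun u => if ancbarb nV par u w then lam u / r u else 0).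

Lemma path_load_weight w : path_load w = sumV nV (fun u => lam u * path_weight w u).
Proof.
  apply sumV_ext. intros u _. unfold path_weight. destruct (ancbarb nV par u w); unfold Rdiv; ring.
Qed.

Lemma path_weight_nonneg w u : inV nV u -> 0 <= path_weight w u.
Proof.
  intros Hu. unfold path_weight. destruct (ancbarb nV par u w); [|lra].
  left. now apply Rinv_0_lt_compat, Hr.
Qed.

Lemma gen_path_workload gam x w :
  gen gam (wsum (path_weight w)) x =
  path_load w - sumV nV (fun v => drate r gam x v * path_weight w v).
Proof.
  rewrite gen_wsum, path_load_weight, <- sumV_minus. apply sumV_ext. intros; ring.
Qed.

Lemma path_service_le1 gam x w :
  in_convZ nV par (gam x) -> sumV nV (fun v => drate r gam x v * path_weight w v) <= 1.
Proof.
  intros Hconv. eapply Rle_trans; [|apply (convZ_path_sum_le1 nV par (gam x) w Hconv)].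
  apply sumV_le. intros v Hv. pose proof (Hr v Hv). pose proof (convZ_bounds nV par _ v Hconv Hv).
  unfold drate, path_weight. destruct (ancbarb nV par v w); [|lra].
  destruct (Nat.leb 1 (x v)); [right; field|]; lra.
Qed.

Lemma necessity gam w :
  is_scheme nV par gam -> 1 <= path_load w -> ~ positive_recurrent nV lam r gam.
Proof.
  intros Hs Hload.
  assert (Hgam : forall x v, inV nV v -> 0 <= gam x v <= 1)
    by (intros x v Hv; exact (convZ_bounds nV par _ v (Hs x) Hv)).
  destruct (sumV_pos_exists nV _ (Rlt_le_trans 0 1 _ Rlt_0_1 Hload)) as [v0 [Hv0 Hne]].
  destruct (ancbarb nV par v0 w) eqn:Hv0w; [|contradiction].
  assert (Hlv0 : 0 < lam v0).
  { destruct (Hlam v0 Hv0) as [|E]; [auto|]. rewrite <- E in Hne. unfold Rdiv in Hne.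
    rewrite Rmult_0_l in Hne. contradiction. }
  assert (HLam : 0 < sumV nV lam)
    by (eapply Rlt_le_trans; [exact Hlv0|apply (sumV_ge_term nV lam v0 Hlam Hv0)]).
  intros [Hq0|Hret].
  - pose proof (qrate_pos gam Hgam HLam zero_state). lra.
  - set (W := wsum (path_weight w)).
    apply (not_return_of_submartingale gam Hgam HLam W (sumV nV (path_weight w)))
      with (v := v0); auto.
    + intros x. apply wsum_zero.
    + intros x _. unfold W. rewrite (step_gen gam Hgam HLam), gen_path_workload.
      pose proof (path_service_le1 gam x w (Hs x)).
      pose proof (Rle_mult_inv_pos
        (path_load w - sumV nV (fun v => drate r gam x v * path_weight w v)) _
        ltac:(lra) (qrate_pos gam Hgam HLam x)).
      unfold Rdiv. lra.
    + intros x v Hv. unfold W. rewrite wsum_incr by auto.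
      pose proof (sumV_ge_term nV (path_weight w) v (path_weight_nonneg w) Hv).
      pose proof (path_weight_nonneg w v Hv). split; [lra|].
      destruct (x v) as [|k] eqn:E.
      * rewrite wsum_decr_idle by auto. lra.
      * rewrite wsum_decr by (auto; lia). lra.
    + apply sumV_nonneg, path_weight_nonneg.
    + unfold W. rewrite wsum_incr, wsum_zero by (auto; apply is_zero_spec; reflexivity).
      unfold path_weight. rewrite Hv0w, Rplus_0_l. now apply Rinv_0_lt_compat, Hr.
Qed.

Hypothesis HT : is_rooted_tree nV par.

Definition priority (x : state) (v : nat) : R := if top_busy nV par x v then 1 else 0.

Lemma priority_bounds x v : inV nV v -> 0 <= priority x v <= 1.
Proof. intros _. unfold priority. destruct (top_busy nV par x v); lra. Qed.

Lemma priority_scheme : is_scheme nV par priority.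
Proof.
  intros x. exists [(1, top_busy nV par x)]. split; [|split].
  - intros p [<-|[]]. split; [simpl; lra|apply (top_busy_inZ nV par HT)].
  - simpl. ring.
  - intros v _. simpl. unfold priority. destruct (top_busy nV par x v); ring.
Qed.

Lemma drate_priority_top x a : top_busy nV par x a = true -> drate r priority x a = r a.
Proof.
  intros Htop. unfold drate, priority. rewrite Htop.
  apply top_busy_spec in Htop as [Hbusy _]. apply Nat.leb_le in Hbusy. rewrite Hbusy. ring.
Qed.

Lemma priority_path_service x w :
  inV nV w -> (exists u, ancbarb nV par u w = true /\ (1 <= x u)%nat) ->
  1 <= sumV nV (fun v => drate r priority x v * path_weight w v).
Proof.
  intros Hw Hbusy. destruct (top_busy_exists nV par HT x w Hw Hbusy) as [a [Ha [Haw Htop]]].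
  apply Rle_trans with (drate r priority x a * path_weight w a).
  - rewrite drate_priority_top by auto. unfold path_weight. rewrite Haw.
    right. field. apply Rgt_not_eq, Hr, Ha.
  - apply (sumV_ge_term nV (fun v => drate r priority x v * path_weight w v)); [|exact Ha].
    intros v Hv. apply Rmult_le_pos; [apply (drate_bounds priority priority_bounds x v Hv)|].
    now apply path_weight_nonneg.
Qed.

Lemma priority_total_service s0 x :
  (forall v, inV nV v -> s0 <= r v) -> is_zero nV x = false ->
  s0 <= sumV nV (fun v => drate r priority x v).
Proof.
  intros Hs0 Hz. destruct (is_zero_false x Hz) as [u [Hu Hxu]].
  destruct (top_busy_exists nV par HT x u Hu) as [a [Ha [_ Htop]]];
    [exists u; split; [apply ancbarb_refl|auto]|].
  apply Rle_trans with (drate r priority x a); [rewrite drate_priority_top; auto|].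
  apply (sumV_ge_term nV (fun v => drate r priority x v)); [|exact Ha].
  intros v Hv. apply (drate_bounds priority priority_bounds x v Hv).
Qed.

Lemma gen_path_workload_sq_le eps x w :
  inV nV w -> path_load w <= 1 - eps ->
  gen priority (fun y => wsum (path_weight w) y ^ 2) x <=
  - 2 * eps * wsum (path_weight w) x + sumV nV (fun v => (lam v + r v) * path_weight w v ^ 2).
Proof.
  intros Hw Hload. rewrite gen_wsum_sq, gen_path_workload.
  assert (Hrem : sumV nV (fun v => (lam v + drate r priority x v) * path_weight w v ^ 2) <=
                 sumV nV (fun v => (lam v + r v) * path_weight w v ^ 2)).
  { apply sumV_le. intros v Hv. apply Rmult_le_compat_r; [apply pow2_ge_0|].
    pose proof (drate_bounds priority priority_bounds x v Hv). lra. }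
  enough (wsum (path_weight w) x *
          (path_load w - sumV nV (fun v => drate r priority x v * path_weight w v))
          <= - eps * wsum (path_weight w) x) by lra.
  pose proof (wsum_nonneg (path_weight w) x (path_weight_nonneg w)) as Hnonneg.
  destruct Hnonneg as [Hpos|Hzero]; [|rewrite <- Hzero; lra].
  assert (Hbusy : exists u, ancbarb nV par u w = true /\ (1 <= x u)%nat).
  { destruct (sumV_pos_exists nV _ Hpos) as [u [Hu Hne]]. exists u. unfold path_weight in Hne.
    destruct (ancbarb nV par u w); [|lra]. split; [reflexivity|].
    destruct (x u); [simpl in Hne; lra|lia]. }
  pose proof (priority_path_service x w Hw Hbusy). nra.
Qed.

Lemma path_workloads_ge_num_flows nu x :
  (forall w, inV nV w -> nu <= / r w) ->
  nu * INR (num_flows x) <= sumV nV (fun w => wsum (path_weight w) x).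
Proof.
  intros Hnu. rewrite num_flows_INR. unfold wsum at 1. rewrite <- sumV_scal.
  apply sumV_le. intros w Hw.
  apply Rle_trans with (path_weight w w * INR (x w)).
  - unfold path_weight. rewrite ancbarb_refl. pose proof (pos_INR (x w)).
    pose proof (Hnu w Hw). nra.
  - apply (sumV_ge_term nV (fun u => path_weight w u * INR (x u))); [|exact Hw].
    intros u Hu. apply Rmult_le_pos; [now apply path_weight_nonneg|apply pos_INR].
Qed.

Lemma gen_quadratic_le eps nu x :
  0 <= eps -> (forall w, inV nV w -> path_load w <= 1 - eps) ->
  (forall w, inV nV w -> nu <= / r w) ->
  gen priority (fun y => sumV nV (fun w => wsum (path_weight w) y ^ 2)) x <=
  - 2 * eps * nu * INR (num_flows x) +
  sumV nV (fun w => sumV nV (fun v => (lam v + r v) * path_weight w v ^ 2)).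
Proof.
  intros Heps Hload Hnu. rewrite gen_sumV.
  apply Rle_trans with (sumV nV (fun w => - 2 * eps * wsum (path_weight w) x
                                  + sumV nV (fun v => (lam v + r v) * path_weight w v ^ 2))).
  - apply sumV_le. intros w Hw. now apply gen_path_workload_sq_le, Hload.
  - rewrite sumV_plus, sumV_scal. pose proof (path_workloads_ge_num_flows nu x Hnu). nra.
Qed.

Lemma gen_geometric_le th s0 x D :
  (forall v, inV nV v -> s0 <= r v) -> 0 <= th <= 1 -> th * sumV nV lam <= s0 / 2 ->
  is_zero nV x = false -> num_flows x = S D ->
  gen priority (fun y => 1 - th ^ num_flows y) x <= - (th ^ D * ((1 - th) * (s0 / 2))).
Proof.
  intros Hs0 Hth HthLam Hz HD. rewrite (gen_geometric priority th x D HD).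
  pose proof (priority_total_service s0 x Hs0 Hz).
  replace (- (th ^ D * ((1 - th) * (s0 / 2)))) with (th ^ D * (1 - th) * - (s0 / 2)) by ring.
  apply Rmult_le_compat_l; [apply Rmult_le_pos; [apply pow_le|]|]; lra.
Qed.

Lemma priority_lyapunov :
  (forall w, inV nV w -> path_load w < 1) -> 0 < sumV nV lam ->
  exists U : state -> R, (forall x, 0 <= U x) /\
    forall x, is_zero nV x = false -> step priority U x <= U x - 1.
Proof.
  intros Hload HLam.
  destruct (inV_pos_lower_bound nV (fun w => 1 - path_load w)) as [eps [Heps Heps_le]].
  { intros w Hw. specialize (Hload w Hw). lra. }
  assert (Heps_load : forall w, inV nV w -> path_load w <= 1 - eps)
    by (intros w Hw; specialize (Heps_le w Hw); lra).
  destruct (inV_pos_lower_bound nV (fun w => / r w)) as [nu [Hnu Hnu_le]].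
  { intros w Hw. now apply Rinv_0_lt_compat, Hr. }
  destruct (inV_pos_lower_bound nV r) as [s0 [Hs0 Hs0_le]]; [exact Hr|].
  set (B := sumV nV (fun w => sumV nV (fun v => (lam v + r v) * path_weight w v ^ 2))).
  set (th := s0 / (s0 + 2 * sumV nV lam)).
  assert (Hth : 0 < th) by (apply Rdiv_lt_0_compat; lra).
  assert (Hth_eq : th * (s0 + 2 * sumV nV lam) = s0) by (unfold th; field; lra).
  assert (Hth1 : th < 1) by nra.
  destruct (geometric_compensation (2 * eps * nu) (B + qmax) th ((1 - th) * (s0 / 2)))
    as [M [HM HMcover]]; [nra|lra|nra|].
  set (Q := fun y => sumV nV (fun w => wsum (path_weight w) y ^ 2)).
  exists (fun y => Q y + M * (1 - th ^ num_flows y)). split.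
  - intros x.
    assert (th ^ num_flows x <= 1) by (rewrite <- (pow1 (num_flows x)); apply pow_incr; lra).
    assert (0 <= Q x) by (apply sumV_nonneg; intros; apply pow2_ge_0). nra.
  - intros x Hz. apply (step_le_of_gen_le priority priority_bounds HLam).
    destruct (num_flows x) as [|D] eqn:HD; [pose proof (num_flows_pos x Hz); lia|].
    rewrite gen_plus, gen_scal.
    pose proof (gen_quadratic_le eps nu x ltac:(lra) Heps_load Hnu_le) as HQ.
    rewrite HD in HQ. fold B Q in HQ.
    pose proof (gen_geometric_le th s0 x D Hs0_le ltac:(lra) ltac:(nra) Hz HD) as HP.
    specialize (HMcover D). pose proof (Rmult_le_compat_l M _ _ HM HP). nra.
Qed.

Lemma sufficiency :
  (forall w, inV nV w -> path_load w < 1) -> positive_recurrent nV lam r priority.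
Proof.
  intros Hload. destruct (sumV_nonneg nV lam Hlam) as [HLam|HLam].
  - right. destruct (priority_lyapunov Hload HLam) as [U [HU0 HUdrift]].
    exact (return_of_lyapunov priority priority_bounds HLam U HU0 HUdrift).
  - left. unfold qrate. rewrite HLam. apply sumV_ext. intros v _.
    unfold drate, zero_state. simpl. ring.
Qed.

End PathLoads.

End Network.

Theorem proposition2 (nV : nat) (par : nat -> nat) (lam r : nat -> R) :
  is_rooted_tree nV par ->
  (forall v, inV nV v -> 0 <= lam v) ->
  (forall v, inV nV v -> 0 < r v) ->
  ((exists gam : state -> nat -> R,
      is_scheme nV par gam /\ positive_recurrent nV lam r gam)
   <->
   (forall v, inV nV v ->
      sumV nV (fun u => if ancbarb nV par u v then lam u / r u else 0) < 1)).
Proof.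
  intros HT Hlam Hr. split.
  - intros [gam [Hscheme Hrec]] w _. apply Rnot_le_lt. intros Hload.
    exact (necessity nV lam r Hlam Hr par gam w Hscheme Hload Hrec).
  - intros Hload. exists (priority nV par).
    split; [exact (priority_scheme nV par HT)|exact (sufficiency nV lam r Hlam Hr par HT Hload)].
Qed.
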